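(* For every $F$-linear subspace $V$ of $M_n$ there exists a quasi-polynomial $P\in\mathcal C\langle X\rangle$ such that $\mathrm{im}(P)=V$, where for $P$ involving only $x_1,\dots,x_m$ (and coordinates $x^{(k)}_{ij}$, $k\le m$), $\mathrm{im}(P)=\{P(A_1,\dots,A_m): A_1,\dots,A_m\in M_n\}$.
   Context: Let $F$ be a field of characteristic $0$, $n\ge1$, $M_n=M_n(F)$. Let $\mathcal C=F[x^{(k)}_{ij}:1\le i,j\le n,\ k=1,2,\dots]$ and $X=\{x_1,x_2,\dots\}$ noncommuting indeterminates; quasi-polynomials are elements of the free $\mathcal C$-algebra $\mathcal C\langle X\rangle$. The evaluation $P(A_1,\dots,A_m)$ at $A_k=(a^{(k)}_{ij})\in M_n$ is obtained by substituting $A_k$ for $x_k$ and $a^{(k)}_{ij}$ for $x^{(k)}_{ij}$. *)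

From HB Require Import structures.
From mathcomp Require Import all_boot all_order all_algebra.
Set Implicit Arguments. Unset Strict Implicit. Unset Printing Implicit Defensive.
Import GRing.Theory.
Local Open Scope ring_scope.

(* Quasi-polynomials over C = F[x^(k)_ij], as terms of the free C-algebra
   C<X>:  constants of F, commuting coordinate indeterminates x^(k)_ij
   (central), noncommuting indeterminates x_k, sums and products.
   Every element of C<X> is represented by such a term and conversely. *)
Inductive quasipoly (F : Type) (n : nat) : Type :=
| QConst of F
| QCoord of nat & 'I_n & 'I_n
| QVar of nat
| QAdd of quasipoly F n & quasipoly F n
| QMul of quasipoly F n & quasipoly F n.

Fixpoint qeval (F : fieldType) (n : nat) (A : nat -> 'M[F]_n) (P : quasipoly F n)
  : 'M[F]_n :=
  match P with
  | QConst c => c%:M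
  | QCoord k i j => (A k i j)%:M
  | QVar k => A k
  | QAdd P1 P2 => qeval A P1 + qeval A P2
  | QMul P1 P2 => qeval A P1 *m qeval A P2
  end.

Definition qimage (F : fieldType) (n : nat) (P : quasipoly F n) (B : 'M[F]_n) : Prop :=
  exists A : nat -> 'M[F]_n, qeval A P = B.

From HB Require Import structures.
From mathcomp Require Import all_boot all_order all_algebra.
Set Implicit Arguments. Unset Strict Implicit. Unset Printing Implicit Defensive.
Import GRing.Theory.
Local Open Scope ring_scope.

(* Let N = n^2 and let H(A) be the N x N matrix whose k-th row is the
   vectorisation of A_k (k < N).  Its entries are coordinates x^(k)_ij, so
   det H(A) and the entries of adj H(A) are (scalar) polynomials in the
   coordinates.  By Cramer's rule  vec(M) adj(H) H = det(H) vec(M), i.e.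
       det H(A) . M = sum_k (vec(M) adj H(A))_k A_k,
   which exhibits  A |-> det H(A) . M  as a quasi-polynomial for each fixed
   matrix M.  For a family b_0, ..., b_(d-1) spanning V we then take
       P(A) = sum_l (A_(N+l))_00 . det H(A) . b_l.
   Every value of P lies in V; conversely choosing A_0, ..., A_(N-1) to be
   the matrix units (so that H(A) = 1) and A_(N+l) = c_l scalar shows that
   every combination sum_l c_l b_l is a value of P.  The file first sets up
   the closure properties of quasi-polynomial functions, then Cramer's
   identity, then the span statement, from which the theorem follows with
   the canonical basis of V. *)

Section QuasiPolynomialFunctions.
Variables (F : fieldType) (n : nat).
Implicit Types (A : nat -> 'M[F]_n) (M : 'M[F]_n).

Definition scalar_qpoly (f : (nat -> 'M[F]_n) -> F) :=
  exists P : quasipoly F n, forall A, qeval A P = (f A)%:M.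

Definition matrix_qpoly (g : (nat -> 'M[F]_n) -> 'M[F]_n) :=
  exists P : quasipoly F n, forall A, qeval A P = g A.

Lemma scalar_qpoly_ext (f g : (nat -> 'M[F]_n) -> F) :
  (forall A, f A = g A) -> scalar_qpoly f -> scalar_qpoly g.
Proof. by move=> fg [P hP]; exists P => A; rewrite hP fg. Qed.

Lemma matrix_qpoly_ext (f g : (nat -> 'M[F]_n) -> 'M[F]_n) :
  (forall A, f A = g A) -> matrix_qpoly f -> matrix_qpoly g.
Proof. by move=> fg [P hP]; exists P => A; rewrite hP fg. Qed.

Lemma scalar_qpoly_const (c : F) : scalar_qpoly (fun => c).
Proof. by exists (QConst n c). Qed.

Lemma scalar_qpoly_coord k (i j : 'I_n) : scalar_qpoly (fun A => A k i j).
Proof. by exists (QCoord F k i j). Qed.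

Lemma scalar_qpoly_add (f g : (nat -> 'M[F]_n) -> F) :
  scalar_qpoly f -> scalar_qpoly g -> scalar_qpoly (fun A => f A + g A).
Proof. by move=> [P hP] [Q hQ]; exists (QAdd P Q) => A /=; rewrite hP hQ raddfD. Qed.

Lemma scalar_qpoly_mul (f g : (nat -> 'M[F]_n) -> F) :
  scalar_qpoly f -> scalar_qpoly g -> scalar_qpoly (fun A => f A * g A).
Proof.
by move=> [P hP] [Q hQ]; exists (QMul P Q) => A /=; rewrite hP hQ -scalar_mxM.
Qed.

Lemma scalar_qpoly_sum (I : Type) (r : seq I) (p : pred I)
    (f : I -> (nat -> 'M[F]_n) -> F) :
  (forall i, scalar_qpoly (f i)) ->
  scalar_qpoly (fun A => \sum_(i <- r | p i) f i A).
Proof.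
move=> qf; elim: r => [|a r IHr].
  by apply: scalar_qpoly_ext (scalar_qpoly_const 0) => A; rewrite big_nil.
have [pa | npa] := boolP (p a).
  by apply: scalar_qpoly_ext (scalar_qpoly_add (qf a) IHr) => A; rewrite big_cons pa.
by apply: scalar_qpoly_ext IHr => A; rewrite big_cons (negbTE npa).
Qed.

Lemma scalar_qpoly_prod (I : Type) (r : seq I) (p : pred I)
    (f : I -> (nat -> 'M[F]_n) -> F) :
  (forall i, scalar_qpoly (f i)) ->
  scalar_qpoly (fun A => \prod_(i <- r | p i) f i A).
Proof.
move=> qf; elim: r => [|a r IHr].
  by apply: scalar_qpoly_ext (scalar_qpoly_const 1) => A; rewrite big_nil.
have [pa | npa] := boolP (p a).
  by apply: scalar_qpoly_ext (scalar_qpoly_mul (qf a) IHr) => A; rewrite big_cons pa.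
by apply: scalar_qpoly_ext IHr => A; rewrite big_cons (negbTE npa).
Qed.

Lemma scalar_qpoly_det m (M : (nat -> 'M[F]_n) -> 'M[F]_m) :
  (forall i j, scalar_qpoly (fun A => M A i j)) ->
  scalar_qpoly (fun A => \det (M A)).
Proof.
move=> qM; apply: scalar_qpoly_sum => s.
apply: scalar_qpoly_mul; first exact: scalar_qpoly_const.
by apply: scalar_qpoly_prod => i; apply: qM.
Qed.

Lemma scalar_qpoly_adj m (M : (nat -> 'M[F]_n) -> 'M[F]_m) :
  (forall i j, scalar_qpoly (fun A => M A i j)) ->
  forall i j, scalar_qpoly (fun A => \adj (M A) i j).
Proof.
move=> qM i j.
apply: (@scalar_qpoly_ext (fun A => (-1) ^+ (j + i) * \det (row' j (col' i (M A))))).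
  by move=> A; rewrite mxE.
apply: scalar_qpoly_mul; first exact: scalar_qpoly_const.
by apply: scalar_qpoly_det => a b; apply: scalar_qpoly_ext (qM _ _) => A; rewrite !mxE.
Qed.

Lemma matrix_qpoly_var k : matrix_qpoly (fun A => A k).
Proof. by exists (QVar F n k). Qed.

Lemma matrix_qpoly_scale (f : (nat -> 'M[F]_n) -> F) g :
  scalar_qpoly f -> matrix_qpoly g -> matrix_qpoly (fun A => f A *: g A).
Proof.
by move=> [P hP] [Q hQ]; exists (QMul P Q) => A /=; rewrite hP hQ mul_scalar_mx.
Qed.

Lemma matrix_qpoly_sum (I : Type) (r : seq I) (p : pred I)
    (g : I -> (nat -> 'M[F]_n) -> 'M[F]_n) :
  (forall i, matrix_qpoly (g i)) ->
  matrix_qpoly (fun A => \sum_(i <- r | p i) g i A).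
Proof.
move=> qg; elim: r => [|a r IHr].
  by exists (QConst n 0) => A /=; rewrite big_nil raddf0.
have [pa | npa] := boolP (p a).
  have [[P hP] [Q hQ]] := (qg a, IHr).
  by exists (QAdd P Q) => A /=; rewrite hP hQ big_cons pa.
by apply: matrix_qpoly_ext IHr => A; rewrite big_cons (negbTE npa).
Qed.

Definition vec_rows A : 'M[F]_(n * n) := \matrix_(k, i) mxvec (A k) 0 i.

Lemma det_vec_rows_scale A M :
  \sum_(k < n * n) (mxvec M *m \adj (vec_rows A)) 0 k *: A k
  = \det (vec_rows A) *: M.
Proof.
apply: (can_inj mxvecK); rewrite linear_sum linearZ /=.
transitivity (mxvec M *m \adj (vec_rows A) *m vec_rows A); last first.
  by rewrite -mulmxA mul_adj_mx mul_mx_scalar.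
rewrite [RHS]mulmx_sum_row; apply: eq_bigr => k _; rewrite linearZ /=.
by congr (_ *: _); apply/rowP => i; rewrite !mxE.
Qed.

Lemma matrix_qpoly_det_scale M :
  matrix_qpoly (fun A => \det (vec_rows A) *: M).
Proof.
apply: matrix_qpoly_ext (fun A => det_vec_rows_scale A M) _.
apply: matrix_qpoly_sum => k; apply: matrix_qpoly_scale; last exact: matrix_qpoly_var.
apply: (@scalar_qpoly_ext (fun A => \sum_j mxvec M 0 j * \adj (vec_rows A) j k)).
  by move=> A; rewrite !mxE.
apply: scalar_qpoly_sum => j; apply: scalar_qpoly_mul; first exact: scalar_qpoly_const.
apply: scalar_qpoly_adj => a b; case/mxvec_indexP: b => i j'.
by apply: scalar_qpoly_ext (scalar_qpoly_coord a i j') => A; rewrite mxE mxvecE.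
Qed.

Lemma vec_rows_units A :
  (forall k : 'I_(n * n), A k = vec_mx (\row_i (i == k)%:R)) -> vec_rows A = 1%:M.
Proof. by move=> units; apply/matrixP => k i; rewrite !mxE units vec_mxK !mxE eq_sym. Qed.

End QuasiPolynomialFunctions.

Section SpanAsImage.
Variables (F : fieldType) (n d : nat) (X : d.-tuple 'M[F]_n.+1).
Local Notation N := (n.+1 * n.+1)%N.

Definition span_qpoly_fun (A : nat -> 'M[F]_n.+1) : 'M[F]_n.+1 :=
  \sum_(l < d) A (N + l)%N 0 0 *: (\det (vec_rows A) *: X`_l).

Lemma span_qpoly_fun_qpoly : matrix_qpoly span_qpoly_fun.
Proof.
apply: matrix_qpoly_sum => l; apply: matrix_qpoly_scale.
  exact: scalar_qpoly_coord.
exact: matrix_qpoly_det_scale.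
Qed.

Lemma span_qpoly_fun_in_span A : span_qpoly_fun A \in <<X>>%VS.
Proof.
apply: rpred_sum => l _; do 2!apply: rpredZ.
by apply/memv_span/mem_nth; rewrite size_tuple.
Qed.

Definition span_witness (c : 'I_d -> F) (k : nat) : 'M[F]_n.+1 :=
  if (k < N)%N then vec_mx (\row_(i < N) ((i : nat) == k)%:R)
  else (\sum_(l < d | (N + l == k)%N) c l)%:M.

Lemma span_qpoly_fun_witness (c : 'I_d -> F) :
  span_qpoly_fun (span_witness c) = \sum_(l < d) c l *: X`_l.
Proof.
rewrite /span_qpoly_fun.
have -> : vec_rows (span_witness c) = 1%:M.
  by apply: vec_rows_units => k; rewrite /span_witness ltn_ord.
rewrite det1; apply: eq_bigr => l _; rewrite scale1r /span_witness.
rewrite ltnNge leq_addr /= mxE eqxx mulr1n.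
rewrite (eq_bigl (pred1 l)) ?big_pred1_eq // => l'.
by rewrite /= eqn_add2l.
Qed.

Lemma span_is_qimage :
  exists P : quasipoly F n.+1, forall B, B \in <<X>>%VS <-> qimage P B.
Proof.
have [P hP] := span_qpoly_fun_qpoly.
exists P => B; split => [BX | [A <-]]; last by rewrite hP span_qpoly_fun_in_span.
exists (span_witness (fun l => coord X l B)).
by rewrite hP span_qpoly_fun_witness -coord_span.
Qed.

End SpanAsImage.

Theorem mainTheorem3 (F : fieldType) (n : nat) (hF : [pchar F] =i pred0)
  (hn : (0 < n)%N) (V : {vspace 'M[F]_n}) :
  exists P : quasipoly F n, forall B : 'M[F]_n, B \in V <-> qimage P B.
Proof.
case: n hn V => // n _ V.
by rewrite -(span_basis (vbasisP V)); apply: span_is_qimage.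
Qed.
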